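(* Let $R$ be a commutative Artinian ring, $M$ a non-zero $R$-module, and $M=\sum_{i=1}^n K_i$ a minimal PS-hollow representation of $M$, where $K_i$ is $H_i$-PS-hollow for each $i$. Suppose that every nonzero submodule of $In(K_i)$ is $H_i$-PS-hollow for all $i\in\{1,\dots,n\}$. Then $M=\bigoplus_{i=1}^n K_i$.
   Context: An $R$-submodule $N\leq M$ is PS-hollow iff for every ideal $I\leq R$ and every submodule $L\leq M$: $N\subseteq IM+L$ implies $N\subseteq IM$ or $N\subseteq L$. For PS-hollow $N$: $A_N=\{I\leq R: N\subseteq IM\}$, $H_N$ the set of minimal elements of $A_N$, $In(N)=\bigcap_{I\in H_N}IM$ ($=M$ if $H_N=\emptyset$); $N$ is $H$-PS-hollow iff PS-hollow with $H_N=H$. A minimal PS-hollow representation is $M=\sum_{i=1}^n K_i$ with each $K_i$ $H_i$-PS-hollow, $In(K_1),\dots,In(K_n)$ pairwise incomparable, and $K_j\not\subseteq\sum_{i\neq j}K_i$ for all $j$. *)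

From HB Require Import structures.
From mathcomp Require Import all_boot all_algebra.
From mathcomp Require Import boolp classical_sets.
Set Implicit Arguments. Unset Strict Implicit. Unset Printing Implicit Defensive.
Import GRing.Theory.
Local Open Scope ring_scope.
Local Open Scope classical_set_scope.

Section PS.
Variables (R : comNzRingType) (M : lmodType R).

Definition is_ideal (I : set R) : Prop :=
  I 0 /\ (forall a b, I a -> I b -> I (a + b)) /\ (forall r a, I a -> I (r * a)).

Definition is_submod (N : set M) : Prop :=
  N 0 /\ (forall x y, N x -> N y -> N (x + y)) /\ (forall r x, N x -> N (r *: x)).

Definition artinian : Prop :=
  forall f : nat -> set R, (forall k, is_ideal (f k)) ->
    (forall k, f k.+1 `<=` f k) -> exists k, forall m, (k <= m)%N -> f m = f k.

Definition IM (I : set R) : set M :=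
  [set x | exists s : seq (R * M), (forall p, p \in s -> I p.1) /\
                                   x = \sum_(p <- s) p.1 *: p.2].

Definition sum2 (N L : set M) : set M :=
  [set x | exists a b, N a /\ L b /\ x = a + b].

Definition sumfam (n : nat) (K : 'I_n -> set M) (P : pred 'I_n) : set M :=
  [set x | exists f : 'I_n -> M, (forall i, P i -> K i (f i)) /\
                                x = \sum_(i < n | P i) f i].

Definition PS_hollow (N : set M) : Prop :=
  is_submod N /\
  forall (I : set R) (L : set M), is_ideal I -> is_submod L ->
    N `<=` sum2 (IM I) L -> N `<=` IM I \/ N `<=` L.

Definition A_N (N : set M) : set (set R) := [set I | is_ideal I /\ N `<=` IM I].

Definition H_N (N : set M) : set (set R) :=
  [set I | A_N N I /\ forall J, A_N N J -> J `<=` I -> J = I].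

(* In(N) = intersection of IM over I in H_N (= M when H_N is empty) *)
Definition In_ (N : set M) : set M := [set x | forall I, H_N N I -> IM I x].

Definition H_PS_hollow (H : set (set R)) (N : set M) : Prop :=
  PS_hollow N /\ H_N N = H.

Definition min_PS_hollow_rep (n : nat) (K : 'I_n -> set M)
    (H : 'I_n -> set (set R)) : Prop :=
  sumfam K predT = setT /\
  (forall i, H_PS_hollow (H i) (K i)) /\
  (forall i j, i != j -> ~ (In_ (K i) `<=` In_ (K j))) /\
  (forall j, ~ (K j `<=` sumfam K (fun i => i != j))).

Definition is_direct_sum (n : nat) (K : 'I_n -> set M) : Prop :=
  sumfam K predT = setT /\
  forall j, K j `&` sumfam K (fun i => i != j) = [set 0].

End PS.

(** If [N := K_j ∩ Σ_{i≠j} K_i] were nonzero, it would be a submodule of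
    [In(K_j)], hence [H_j]-PS-hollow.  For each [i ≠ j] with [N ⊄ In(K_i)] pick
    [Q_i ∈ H_{K_i}] with [N ⊄ Q_i M]; since [K_i ⊆ Q_i M], PS-hollowness of [N]
    applied to [N ⊆ Σ_{i≠j} Q_i M] forces [N ⊆ In(K_i)] for some [i ≠ j].
    Then every [Q ∈ H_{K_i}] contains, by the descending chain condition, a
    minimal ideal [J] with [N ⊆ JM], i.e. [J ∈ H_N = H_{K_j}], so
    [In(K_j) ⊆ JM ⊆ QM].  Thus [In(K_j) ⊆ In(K_i)], contradicting minimality
    of the representation. *)

From HB Require Import structures.
From mathcomp Require Import all_boot all_algebra.
From mathcomp Require Import boolp classical_sets.
Import GRing.Theory.
Set Implicit Arguments. Unset Strict Implicit.
Local Open Scope ring_scope.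
Local Open Scope classical_set_scope.

Section ArtinianMinimal.
Variable R : comNzRingType.

Lemma artinian_minimal (P : set (set R)) (I : set R) :
  artinian R -> (forall J, P J -> is_ideal J) -> P I ->
  exists J, [/\ P J, J `<=` I & forall J', P J' -> J' `<=` J -> J' = J].
Proof.
move=> art idealP PI; apply: contrapT => no_min.
pose Q J := P J /\ J `<=` I.
have shrink J : Q J -> exists J', Q J' /\ J' `<=` J /\ J' <> J.
  move=> [PJ JI]; apply: contrapT => no_smaller; apply: no_min.
  exists J; split => // J' PJ' J'J; apply: contrapT => J'neJ.
  by apply: no_smaller; exists J'; do !split => //; exact: subset_trans J'J JI.
have [g gP] : {g : set R -> set R &
    forall J, Q J -> Q (g J) /\ g J `<=` J /\ g J <> J}.
  apply: (choice (P := fun J J' => Q J -> Q J' /\ J' `<=` J /\ J' <> J)) => J.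
  case: (pselect (Q J)) => [QJ|nQJ]; last by exists J.
  by have [J' ?] := shrink J QJ; exists J'.
pose chain k := iter k g I.
have Qchain k : Q (chain k) by elim: k => [|k IHk]; [split|exact: (gP _ IHk).1].
have [k stable] := art chain (fun k => idealP _ (Qchain k).1)
  (fun k => (gP _ (Qchain k)).2.1).
exact: (gP _ (Qchain k)).2.2 (stable k.+1 (leqnSn k)).
Qed.

End ArtinianMinimal.

Section PSHollow.
Variables (R : comNzRingType) (M : lmodType R).
Implicit Types (N L : set M) (I Q : set R).

Lemma IM_submod I : is_ideal I -> is_submod (IM (M:=M) I).
Proof.
move=> [_ [_ IZ]]; split; [|split].
- by exists [::]; rewrite big_nil.
- move=> _ _ [s [sI ->]] [t [tI ->]]; exists (s ++ t); rewrite big_cat.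
  by split => // p; rewrite mem_cat => /orP[/sI|/tI].
- move=> r _ [s [sI ->]]; exists [seq (r * p.1, p.2) | p <- s]; split.
  + by move=> _ /mapP[p /sI Ip ->]; exact: IZ.
  + by rewrite scaler_sumr big_map; apply: eq_bigr => p _; rewrite scalerA.
Qed.

Lemma IM_mono I Q : I `<=` Q -> IM (M:=M) I `<=` IM Q.
Proof. by move=> IQ _ [s [sI ->]]; exists s; split => // p /sI /IQ. Qed.

Lemma setI_submod N L : is_submod N -> is_submod L -> is_submod (N `&` L).
Proof.
move=> [N0 [ND NZ]] [L0 [LD LZ]]; split; [by []|split].
- by move=> x y [? ?] [? ?]; split; [exact: ND|exact: LD].
- by move=> r x [? ?]; split; [exact: NZ|exact: LZ].
Qed.

Lemma sum2_submod N L : is_submod N -> is_submod L -> is_submod (sum2 N L).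
Proof.
move=> [N0 [ND NZ]] [L0 [LD LZ]]; split; [|split].
- by exists 0, 0; rewrite addr0.
- move=> _ _ [a [b [Na [Lb ->]]]] [c [d [Nc [Ld ->]]]].
  by exists (a + c), (b + d); do !split; [exact: ND|exact: LD|rewrite addrACA].
- move=> r _ [a [b [Na [Lb ->]]]]; exists (r *: a), (r *: b).
  by do !split; [exact: NZ|exact: LZ|rewrite scalerDr].
Qed.

Lemma sumfam_submod n (K : 'I_n -> set M) (P : pred 'I_n) :
  (forall i, is_submod (K i)) -> is_submod (sumfam K P).
Proof.
move=> Ksub; split; [|split].
- exists (fun=> 0); split; last by rewrite big1.
  by move=> i _; case: (Ksub i).
- move=> _ _ [f [fK ->]] [g [gK ->]]; exists (fun i => f i + g i).
  rewrite big_split; split => // i Pi.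
  by case: (Ksub i) => _ [KD _]; apply: KD; [exact: fK|exact: gK].
- move=> r _ [f [fK ->]]; exists (fun i => r *: f i).
  rewrite scaler_sumr; split => // i Pi.
  by case: (Ksub i) => _ [_ KZ]; apply: KZ; exact: fK.
Qed.

Definition sums (s : seq (set M)) : set M := foldr (@sum2 R M) [set 0] s.

Lemma sums_submod (s : seq (set M)) :
  (forall N, N \in s -> is_submod N) -> is_submod (sums s).
Proof.
elim: s => [|N s IHs] sub_s /=.
  by split; [|split=> [x y -> ->|r x ->]]; rewrite ?addr0 ?scaler0.
apply: sum2_submod; first by apply: sub_s; rewrite mem_head.
by apply: IHs => L Ls; apply: sub_s; rewrite in_cons Ls orbT.
Qed.

Lemma sumfam_sub_sums n (K G : 'I_n -> set M) (P : pred 'I_n) :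
  (forall i, P i -> K i `<=` G i) ->
  sumfam K P `<=` sums [seq G i | i <- index_enum 'I_n & P i].
Proof.
move=> KG _ [f [fK ->]]; elim: (index_enum _) => [|i r IHr] /=.
  by rewrite big_nil.
rewrite big_cons; case: ifP => Pi //=.
by exists (f i), (\sum_(j <- r | P j) f j); do !split => //; exact: KG (fK i Pi).
Qed.

Lemma PS_hollow_sub_sums N (s : seq (set R)) :
  PS_hollow N -> (forall Q, Q \in s -> is_ideal Q) ->
  N `<=` sums [seq IM Q | Q <- s] ->
  N `<=` [set 0] \/ exists2 Q, Q \in s & N `<=` IM Q.
Proof.
move=> [_ PS]; elim: s => [|Q s IHs] ideal_s /=; first by left.
have idealQ : is_ideal Q by apply: ideal_s; rewrite mem_head.
have ideal_s' J : J \in s -> is_ideal J.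
  by move=> Js; apply: ideal_s; rewrite in_cons Js orbT.
have sub_rest : is_submod (sums [seq IM J | J <- s]).
  by apply: sums_submod => _ /mapP[J /ideal_s' ? ->]; exact: IM_submod.
move=> /(PS Q _ idealQ sub_rest) [NQ|/(IHs ideal_s') [N0|[J Js NJ]]].
- by right; exists Q; rewrite ?mem_head.
- by left.
- by right; exists J; rewrite ?in_cons ?Js ?orbT.
Qed.

Lemma sub_In N : N `<=` In_ N.
Proof. by move=> x Nx I [[_ NI] _]; exact: NI. Qed.

Lemma In_eq N L : H_N N = H_N L -> In_ N = In_ L.
Proof. by rewrite /In_ => ->. Qed.

(* For [i] outside [P] the whole ring is a dummy choice of [c i]. *)
Lemma PS_hollow_sub_sumfam_In n (K : 'I_n -> set M) (P : pred 'I_n) N :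
  PS_hollow N -> N <> [set 0] -> N `<=` sumfam K P ->
  exists2 i, P i & N `<=` In_ (K i).
Proof.
move=> PSN N_neq0 NK; apply: contrapT => noIn.
have [c cP] : {c : 'I_n -> set R & forall i, is_ideal (c i) /\
    (P i -> K i `<=` IM (c i) /\ ~ N `<=` IM (c i))}.
  apply: (choice (P := fun i Q => is_ideal Q /\
    (P i -> K i `<=` IM Q /\ ~ N `<=` IM Q))) => i.
  case: (pselect (P i)) => [Pi|nPi]; last by exists setT.
  have /existsNP[Q /not_implyP[[[idealQ KQ] _] NQ]] :
      ~ forall Q, H_N (K i) Q -> N `<=` IM Q.
    by move=> NIn; apply: noIn; exists i => // x Nx Q /NIn; exact.
  by exists Q.
have NcM : N `<=` sums [seq IM Q | Q <- [seq c i | i <- index_enum 'I_n & P i]].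
  rewrite -map_comp; apply: subset_trans NK (sumfam_sub_sums _).
  by move=> i Pi; exact: ((cP i).2 Pi).1.
have ideal_c Q : Q \in [seq c i | i <- index_enum 'I_n & P i] -> is_ideal Q.
  by move=> /mapP[i _ ->]; exact: (cP i).1.
case: (PS_hollow_sub_sums PSN ideal_c NcM) => [N0|[Q]].
- by apply: N_neq0; apply/seteqP; split=> // _ ->; case: PSN => -[].
- move=> /mapP[i]; rewrite mem_filter => /andP[Pi _] ->.
  exact: ((cP i).2 Pi).2.
Qed.

Lemma In_sub_In N L : artinian R -> N `<=` In_ L -> In_ N `<=` In_ L.
Proof.
move=> art NL y Ny Q LQ.
have A_NQ : A_N N Q by split=> [|x /NL /(_ Q LQ)//]; exact: LQ.1.1.
have [J [A_NJ JQ J_min]] :=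
  artinian_minimal art (fun J (A_NJ : A_N N J) => A_NJ.1) A_NQ.
exact: IM_mono JQ _ (Ny J (conj A_NJ J_min)).
Qed.

End PSHollow.

Theorem corollary5p24 (R : comNzRingType) (M : lmodType R) (n : nat)
    (K : 'I_n -> set M) (H : 'I_n -> set (set R)) :
  artinian R ->
  (exists m : M, m != 0) ->
  min_PS_hollow_rep K H ->
  (forall i (N : set M), is_submod N -> N `<=` In_ (K i) -> N <> [set 0] ->
     H_PS_hollow (H i) N) ->
  is_direct_sum K.
Proof.
move=> art _ [sumK [KH [In_incomparable _]]] sub_In_hollow; split => // j.
have Ksub i : is_submod (K i) by case: (KH i) => -[].
set N := _ `&` _; apply: contrapT => N_neq0.
have Nsub : is_submod N by apply/setI_submod/sumfam_submod.
have N_In_j : N `<=` In_ (K j) by move=> x [/sub_In].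
have [N_hollow H_N_N] := sub_In_hollow j N Nsub N_In_j N_neq0.
have [i i_neq_j N_In_i] := PS_hollow_sub_sumfam_In N_hollow N_neq0 (@subIsetr _ _ _).
apply: (In_incomparable j i); first by rewrite eq_sym.
by rewrite -(In_eq (N := N)) ?H_N_N ?(KH j).2 //; exact: In_sub_In.
Qed.
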